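(* Let $\mathcal{A}$, $D(\mathcal{A})$, $H(\mathcal{A})$, $H(\mathcal{A}^* )$ be as in the context, let $a,a',b,b'\in\mathbb{Z}_{\ge0}$ with $(-1)^{a+a'}=-1$, $(-1)^{b+b'}=1$, and let $\eta:D(\mathcal{A})\to H(\mathcal{A})\otimes H(\mathcal{A}^* )$ be the algebra homomorphism $$\eta(e_\alpha\otimes 1)=\sum_{\beta,\gamma}(-1)^{a|\beta|+b|\gamma|}\mu^{\beta\gamma}_\alpha e_\beta\otimes\tilde e_\gamma,\qquad \eta(1\otimes e^\alpha)=\sum_{\beta,\gamma}(-1)^{a'|\beta|+b'|\gamma|}m^\alpha_{\gamma\beta}e^\beta\otimes\tilde e^\gamma.$$ Let $R=\sum_\alpha(e_\alpha\otimes1)\otimes(1\otimes e^\alpha)\in D(\mathcal{A})\otimes D(\mathcal{A})$ be the universal $R$-matrix. Then, in $H(\mathcal{A})\otimes H(\mathcal{A}^* )\otimes H(\mathcal{A})\otimes H(\mathcal{A}^* )$ (tensor positions $1,2,3,4$), $$(\eta\otimes\eta)(R)=S''_{14}\,S_{13}\,\tilde S_{24}\,S'_{23},$$ where $S=\sum_\alpha(-1)^{|\alpha|}e_\alpha\otimes e^\alpha$, $\tilde S=\sum_\alpha\tilde e_\alpha\otimes\tilde e^\alpha$, $S'=\sum_\alpha(-1)^{(a+b'+1)|\alpha|}\tilde e_\alpha\otimes e^\alpha$, $S''=\sum_\alpha(-1)^{(a+b')|\alpha|}e_\alpha\otimes\tilde e^\alpha$, and $X_{ij}$ denotes $X$ placed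 in tensor positions $i,j$ with $1$ elsewhere.
   Context: Graded tensor products: $(a_1\otimes b_1)(a_2\otimes b_2)=(-1)^{|b_1||a_2|}a_1a_2\otimes b_1b_2$. $\mathcal{A}$ is a $\mathbb{Z}_2$-graded Hopf algebra over $\mathbb{C}$ with homogeneous basis $e_\alpha$ of degree $|\alpha|$, $e_\alpha e_\beta=\sum_\gamma m^\gamma_{\alpha\beta}e_\gamma$, $\Delta(e_\alpha)=\sum\mu^{\beta\gamma}_\alpha e_\beta\otimes e_\gamma$, antipode coefficients $\gamma(e_\alpha)=\sum\gamma_\alpha^\beta e_\beta$ with inverse $(\gamma^{-1})^\beta_\alpha$; $\mathcal{A}^*$ the dual Hopf algebra with dual basis $e^\alpha$. The Drinfeld double $D(\mathcal{A})$ is spanned by $e_\alpha\otimes e^\beta$ with relations $(e_\alpha\otimes1)(1\otimes e^\beta)=e_\alpha\otimes e^\beta$, $(e_\alpha\otimes1)(e_\beta\otimes1)=\sum m^\gamma_{\alpha\beta}e_\gamma\otimes1$, $(1\otimes e^\alpha)(1\otimes e^\beta)=\sum(-1)^{|\alpha||\beta|}\mu^{\alpha\beta}_\gamma 1\otimes e^\gamma$, $(1\otimes e^\alpha)(e_\beta\otimes1)=\sum(-1)^{|\mu|(|\sigma|+|\delta|)}m^\mu_{\nu\gamma}m^\alpha_{\mu\delta}\mu^{\epsilon\rho}_\beta\mu^{\sigma\nu}_\rho(\gamma^{-1})^\delta_\epsilon e_\sigma\otimes e^\gamma$. The Heisenberg double $H(\mathcal{A})$ is spanned by $e^\alpha\otimes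 e_\beta$ with product $(e^\alpha\otimes e_\beta)(e^\gamma\otimes e_\delta)=\sum(-1)^{|\beta||\gamma|+|\pi||\epsilon|+|\pi||\alpha|+|\epsilon|}m^\gamma_{\pi\epsilon}m^\tau_{\rho\delta}\mu^{\epsilon\rho}_\beta\mu^{\alpha\pi}_\sigma e^\sigma\otimes e_\tau$, with $e_\alpha=1\otimes e_\alpha$, $e^\alpha=e^\alpha\otimes1$. The Heisenberg double $H(\mathcal{A}^* )$ is spanned by $\tilde e_\alpha\otimes\tilde e^\beta$ with product $(\tilde e_\alpha\otimes\tilde e^\beta)(\tilde e_\gamma\otimes\tilde e^\delta)=\sum(-1)^{|\rho||\pi|+|\rho||\epsilon|+|\pi||\delta|}\mu^{\rho\epsilon}_\gamma\mu^{\pi\delta}_\tau m^\beta_{\epsilon\pi}m^\sigma_{\alpha\rho}\tilde e_\sigma\otimes\tilde e^\tau$, with $\tilde e_\alpha=\tilde e_\alpha\otimes1$, $\tilde e^\alpha=1\otimes\tilde e^\alpha$ of degree $|\alpha|$. *)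

From HB Require Import structures.
From mathcomp Require Import all_boot all_order all_algebra.
Set Implicit Arguments. Unset Strict Implicit. Unset Printing Implicit Defensive.
Import Order.TTheory GRing.Theory Num.Theory.
Local Open Scope ring_scope.

Definition sg {F : nzRingType} (n : nat) : F := (-1) ^+ n.
Definition dlt {F : nzRingType} {I : eqType} (i j : I) : F := (i == j)%:R.

(* A Z2-graded Hopf algebra given by structure constants w.r.t. a homogeneous
   basis (e_a)_{a : I}, |a| = deg a.
     m a b g  = m^g_{ab}        (e_a e_b = sum_g m^g_{ab} e_g)
     u g      = coefficient of e_g in the unit 1
     mu a b c = mu^{bc}_a       (Delta e_a = sum mu^{bc}_a e_b (x) e_c)
     eps a    = counit epsilon(e_a)
     gam a b  = gamma_a^b       (antipode: gamma(e_a) = sum_b gamma_a^b e_b)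
     gami a b = (gamma^{-1})_a^b                                            *)
Record graded_hopf (F : fieldType) (I : finType) (deg : I -> bool)
  (m : I -> I -> I -> F) (u : I -> F) (mu : I -> I -> I -> F) (eps : I -> F)
  (gam gami : I -> I -> F) : Prop := GradedHopf {
  gh_deg_m : forall a b g, m a b g != 0 -> deg g = deg a (+) deg b;
  gh_deg_mu : forall a b c, mu a b c != 0 -> deg a = deg b (+) deg c;
  gh_deg_u : forall g, u g != 0 -> deg g = false;
  gh_deg_eps : forall a, eps a != 0 -> deg a = false;
  gh_deg_gam : forall a b, gam a b != 0 -> deg b = deg a;
  gh_assoc : forall a b c g,
    \sum_d m a b d * m d c g = \sum_d m b c d * m a d g;
  gh_unitl : forall a b, \sum_g u g * m g a b = dlt a b;
  gh_unitr : forall a b, \sum_g u g * m a g b = dlt a b;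
  gh_coassoc : forall a x y z,
    \sum_d mu a d z * mu d x y = \sum_d mu a x d * mu d y z;
  gh_counitl : forall a c, \sum_b eps b * mu a b c = dlt a c;
  gh_counitr : forall a b, \sum_c eps c * mu a b c = dlt a b;
  (* Delta is an algebra map into the graded tensor product A (x) A *)
  gh_delta_mul : forall a b x y,
    \sum_g m a b g * mu g x y =
    \sum_a1 \sum_a2 \sum_b1 \sum_b2
      sg (deg a2 * deg b1)%N * mu a a1 a2 * mu b b1 b2 * m a1 b1 x * m a2 b2 y;
  gh_delta_unit : forall x y, \sum_g u g * mu g x y = u x * u y;
  gh_eps_mul : forall a b, \sum_g m a b g * eps g = eps a * eps b;
  gh_eps_unit : \sum_g u g * eps g = 1;
  (* antipode axioms: m (gamma (x) id) Delta = m (id (x) gamma) Delta = 1 eps *)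
  gh_antipodel : forall a g,
    \sum_b \sum_c \sum_d mu a b c * gam b d * m d c g = eps a * u g;
  gh_antipoder : forall a g,
    \sum_b \sum_c \sum_d mu a b c * gam c d * m b d g = eps a * u g;
  gh_gaminvl : forall a c, \sum_b gam a b * gami b c = dlt a c;
  gh_gaminvr : forall a c, \sum_b gami a b * gam b c = dlt a c
}.

Section Doubles.
Variables (F : fieldType) (I : finType) (deg : I -> bool)
  (m : I -> I -> I -> F) (u : I -> F) (mu : I -> I -> I -> F) (eps : I -> F).

(* Basis index of H(A) (pairs (a,b) <-> e^a (x) e_b) and of H(A-dual)
   (pairs (a,b) <-> ~e_a (x) ~e^b). *)
Definition B := (I * I)%type.
Definition bdeg (x : B) : nat := (deg x.1 + deg x.2)%N.

(* Structure constants of H(A): (e^al(x)e_be)(e^ga(x)e_de) = sum c x y z e^si(x)e_ta *)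
Definition HA_c (x y z : B) : F :=
  \sum_pi \sum_ep \sum_rho
    sg (deg x.2 * deg y.1 + deg pi * deg ep + deg pi * deg x.1 + deg ep)%N
    * m pi ep y.1 * m rho y.2 z.2 * mu x.2 ep rho * mu z.1 x.1 pi.

Definition HAs_c (x y z : B) : F :=
  \sum_rho \sum_ep \sum_pi
    sg (deg rho * deg pi + deg rho * deg ep + deg pi * deg y.2)%N
    * mu y.1 rho ep * mu z.2 pi y.2 * m ep pi x.2 * m x.1 rho z.1.

(* Elements of H(A), H(A-dual) as coefficient functions on B. *)
(* units: 1_{H(A)} = 1_{A-dual} (x) 1_A = eps (x) 1 ; 1_{H(A-dual)} = 1_A (x) 1_{A-dual} *)
Definition HA_one (k : B) : F := eps k.1 * u k.2.
Definition HAs_one (k : B) : F := u k.1 * eps k.2.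
(* e_al = 1 (x) e_al and e^al = e^al (x) 1 in H(A) *)
Definition HA_lo (al : I) (k : B) : F := eps k.1 * dlt k.2 al.
Definition HA_up (al : I) (k : B) : F := dlt k.1 al * u k.2.
(* ~e_al = ~e_al (x) 1 and ~e^al = 1 (x) ~e^al in H(A-dual) *)
Definition HAs_lo (al : I) (k : B) : F := dlt k.1 al * eps k.2.
Definition HAs_up (al : I) (k : B) : F := u k.1 * dlt k.2 al.

(* Elements of H(A) (x) H(A-dual) (x) H(A) (x) H(A-dual) as coefficient functions. *)
Definition T4 := B -> B -> B -> B -> F.

Definition tens4 (x1 x2 x3 x4 : B -> F) : T4 :=
  fun k1 k2 k3 k4 => x1 k1 * x2 k2 * x3 k3 * x4 k4.

(* Product in the graded tensor product algebra H(A)(x)H(A-dual)(x)H(A)(x)H(A-dual):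
   (x1(x)x2(x)x3(x)x4)(y1(x)y2(x)y3(x)y4)
     = (-1)^{sum_{p>q} |x_p||y_q|} x1y1 (x) x2y2 (x) x3y3 (x) x4y4. *)
Definition mul4 (X Y : T4) : T4 :=
  fun k1 k2 k3 k4 =>
    \sum_i1 \sum_i2 \sum_i3 \sum_i4 \sum_j1 \sum_j2 \sum_j3 \sum_j4
      X i1 i2 i3 i4 * Y j1 j2 j3 j4
      * sg (bdeg i2 * bdeg j1 + bdeg i3 * (bdeg j1 + bdeg j2)
            + bdeg i4 * (bdeg j1 + bdeg j2 + bdeg j3))%N
      * HA_c i1 j1 k1 * HAs_c i2 j2 k2 * HA_c i3 j3 k3 * HAs_c i4 j4 k4.

(* (eta (x) eta)(R) = sum_al eta(e_al (x) 1) (x) eta(1 (x) e^al), with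
   eta(e_al(x)1) = sum (-1)^{a|be|+b|ga|} mu^{be ga}_al e_be (x) ~e_ga,
   eta(1(x)e^al) = sum (-1)^{a'|be|+b'|ga|} m^al_{ga be} e^be (x) ~e^ga. *)
Definition etaR (a a' b b' : nat) : T4 :=
  fun k1 k2 k3 k4 =>
    \sum_al \sum_be \sum_ga \sum_be' \sum_ga'
      sg (a * deg be + b * deg ga)%N * mu al be ga
      * (sg (a' * deg be' + b' * deg ga')%N * m ga' be' al)
      * tens4 (HA_lo be) (HAs_lo ga) (HA_up be') (HAs_up ga') k1 k2 k3 k4.

Definition S13 : T4 := fun k1 k2 k3 k4 =>
  \sum_al sg (deg al) * tens4 (HA_lo al) HAs_one (HA_up al) HAs_one k1 k2 k3 k4.
Definition St24 : T4 := fun k1 k2 k3 k4 =>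
  \sum_al tens4 HA_one (HAs_lo al) HA_one (HAs_up al) k1 k2 k3 k4.
Definition Sp23 (a b' : nat) : T4 := fun k1 k2 k3 k4 =>
  \sum_al sg ((a + b' + 1) * deg al)%N
    * tens4 HA_one (HAs_lo al) (HA_up al) HAs_one k1 k2 k3 k4.
Definition Spp14 (a b' : nat) : T4 := fun k1 k2 k3 k4 =>
  \sum_al sg ((a + b') * deg al)%N
    * tens4 (HA_lo al) HAs_one HA_one (HAs_up al) k1 k2 k3 k4.

End Doubles.

From HB Require Import structures.
From mathcomp Require Import all_boot all_order all_algebra.
From mathcomp Require Import ring.
From Stdlib Require Import FunctionalExtensionality.
Set Implicit Arguments. Unset Strict Implicit. Unset Printing Implicit Defensive.
Import Order.TTheory GRing.Theory Num.Theory.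
Local Open Scope ring_scope.

(* In a Heisenberg double, a product with one factor in the subalgebra A or A-dual
   reduces, by the (co)unit axioms alone, to a product in that subalgebra.  Hence
   S''_14 S_13 ~S_24 S'_23 is a signed sum over α, β, γ, δ of
     (1 ⊗ e_α e_β) ⊗ (~e_γ ~e_δ ⊗ 1) ⊗ (e^β e^δ ⊗ 1) ⊗ (1 ⊗ ~e^α ~e^γ).
   On the other side, (η ⊗ η)(R) only involves coproducts of products,
   Δ(e_ρ e_σ) = Δ(e_ρ) Δ(e_σ), which expand it over the same four indices.  The two
   coefficients differ by a sign whose exponent is even since a + a' is odd and
   b + b' is even. *)

Section SignsAndSums.
Variable F : nzRingType.

Lemma sgD n1 n2 : sg (n1 + n2) = sg n1 * sg n2 :> F.
Proof. exact: exprD. Qed.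

Lemma sg_odd n1 n2 : odd n1 = odd n2 -> sg n1 = sg n2 :> F.
Proof. by rewrite /sg -signr_odd => ->; rewrite signr_odd. Qed.

Lemma sg_mul4_parity n2 n3 n4 m1 m2 m3 :
  sg (n2 * m1 + n3 * (m1 + m2) + n4 * (m1 + m2 + m3)) =
  sg (odd n2 * odd m1 + odd n3 * (odd m1 + odd m2)
      + odd n4 * (odd m1 + odd m2 + odd m3)) :> F.
Proof. by apply: sg_odd; rewrite !(oddD, oddM, oddb). Qed.

Lemma sum_dlt_l (I : finType) (G : I -> F) z : \sum_j dlt j z * G j = G z.
Proof.
rewrite (bigD1 z) //= /dlt eqxx mul1r big1 ?addr0 // => j /negbTE ->.
by rewrite mul0r.
Qed.

Lemma sum_dlt_r (I : finType) (G : I -> F) z : \sum_j dlt z j * G j = G z.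
Proof. by under eq_bigr do rewrite /dlt eq_sym; exact: sum_dlt_l. Qed.

Lemma dltC (I : eqType) (i j : I) : dlt i j = dlt j i :> F.
Proof. by rewrite /dlt eq_sym. Qed.

Lemma sum_sink3 (T1 T2 T3 : finType) (G : T1 -> T2 -> T3 -> F) :
  \sum_y \sum_a \sum_b G y a b = \sum_a \sum_b \sum_y G y a b.
Proof. by rewrite exchange_big /=; apply: eq_bigr => a _; rewrite exchange_big. Qed.

Lemma sum_sink (T1 T2 T3 T4 : finType) (G : T1 -> T2 -> T3 -> T4 -> F) :
  \sum_y \sum_a \sum_b \sum_c G y a b c = \sum_a \sum_b \sum_c \sum_y G y a b c.
Proof. by rewrite exchange_big /=; apply: eq_bigr => a _; rewrite sum_sink3. Qed.

Lemma mulr_sum2A (T : finType) c (P : T -> T -> F) d :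
  c * ((\sum_i \sum_j P i j) * d) = \sum_i \sum_j c * P i j * d.
Proof.
rewrite mulr_suml mulr_sumr; apply: eq_bigr => i _.
by rewrite mulr_suml mulr_sumr; apply: eq_bigr => j _; rewrite mulrA.
Qed.

Lemma sum_prod4 (T : finType) c (P1 P2 P3 P4 : T -> T -> F) :
  \sum_i1 \sum_i2 \sum_i3 \sum_i4 \sum_j1 \sum_j2 \sum_j3 \sum_j4
    c * P1 i1 j1 * P2 i2 j2 * P3 i3 j3 * P4 i4 j4 =
  c * ((\sum_i \sum_j P1 i j) * (\sum_i \sum_j P2 i j) *
       (\sum_i \sum_j P3 i j) * (\sum_i \sum_j P4 i j)).
Proof.
transitivity (\sum_i1 \sum_j1 \sum_i2 \sum_j2 \sum_i3 \sum_j3 \sum_i4 \sum_j4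
    c * P1 i1 j1 * P2 i2 j2 * P3 i3 j3 * P4 i4 j4).
  apply: eq_bigr => i1 _; rewrite -[LHS]sum_sink; apply: eq_bigr => j1 _.
  apply: eq_bigr => i2 _; rewrite -[LHS]sum_sink3; apply: eq_bigr => j2 _.
  by apply: eq_bigr => i3 _; rewrite exchange_big.
rewrite -!mulrA mulr_sum2A; do 2 apply: eq_bigr => ? _.
rewrite mulr_sum2A; do 2 apply: eq_bigr => ? _.
rewrite mulr_sum2A; do 2 apply: eq_bigr => ? _.
by rewrite mulr_sumr; apply: eq_bigr => ? _; rewrite mulr_sumr.
Qed.

Lemma mulr_sum3r (I : finType) c (G : I -> I -> I -> F) :
  c * \sum_a \sum_b \sum_d G a b d = \sum_a \sum_b \sum_d c * G a b d.
Proof.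
rewrite mulr_sumr; apply: eq_bigr => a _; rewrite mulr_sumr; apply: eq_bigr => b _.
exact: mulr_sumr.
Qed.

End SignsAndSums.

Section TensorCoordinates.
Variables (F : comNzRingType) (I : finType).

Definition tens2 (f g : I -> F) : B I -> F := fun k => f k.1 * g k.2.

Definition mulB (c : B I -> B I -> B I -> F) (x y : B I -> F) : B I -> F :=
  fun k => \sum_i \sum_j x i * y j * c i j k.

Lemma sum_B (G : B I -> F) : \sum_k G k = \sum_i \sum_j G (i, j).
Proof. by rewrite pair_big; apply: eq_bigr => -[]. Qed.

(* When contracting with [w] reduces the structure constants [c] to [δ ⊗ r], [w] is
   the unit of the first tensor factor, and multiplying by [w ⊗ g'] on the right
   only acts on the second factor, through [r]; symmetrically on the left. *)
Lemma mulB_tens2_r c w r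
    (cw : forall x1 x2 y2 z1 z2,
       \sum_y1 w y1 * c (x1, x2) (y1, y2) (z1, z2) = dlt z1 x1 * r x2 y2 z2) x g' :
  mulB c x (tens2 w g') = fun z => \sum_i x (z.1, i) * \sum_j g' j * r i j z.2.
Proof.
apply: functional_extensionality => -[z1 z2]; rewrite /mulB sum_B /=.
transitivity (\sum_x1 dlt z1 x1 * \sum_x2 x (x1, x2) * \sum_y2 g' y2 * r x2 y2 z2);
  last exact: sum_dlt_r.
apply: eq_bigr => x1 _; rewrite mulr_sumr.
apply: eq_bigr => x2 _; rewrite sum_B exchange_big /= !mulr_sumr.
apply: eq_bigr => y2 _.
transitivity (x (x1, x2) * g' y2 * \sum_y1 w y1 * c (x1, x2) (y1, y2) (z1, z2)).
  by rewrite mulr_sumr; apply: eq_bigr => y1 _; rewrite /tens2; ring.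
by rewrite cw; ring.
Qed.

Lemma mulB_tens2_l c w l
    (cw : forall x1 y1 y2 z1 z2,
       \sum_x2 w x2 * c (x1, x2) (y1, y2) (z1, z2) = l x1 y1 z1 * dlt y2 z2) f y :
  mulB c (tens2 f w) y = fun z => \sum_j y (j, z.2) * \sum_i f i * l i j z.1.
Proof.
apply: functional_extensionality => -[z1 z2]; rewrite /mulB sum_B /=.
transitivity (\sum_x1 \sum_x2 \sum_y1 \sum_y2
  tens2 f w (x1, x2) * y (y1, y2) * c (x1, x2) (y1, y2) (z1, z2)).
  by apply: eq_bigr => x1 _; apply: eq_bigr => x2 _; rewrite sum_B.
rewrite sum_sink sum_sink.
transitivity (\sum_y1 \sum_y2 dlt y2 z2 * (y (y1, y2) * \sum_x1 f x1 * l x1 y1 z1));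
  last by apply: eq_bigr => y1 _; rewrite sum_dlt_l.
apply: eq_bigr => y1 _; apply: eq_bigr => y2 _; rewrite !mulr_sumr.
apply: eq_bigr => x1 _.
transitivity (f x1 * y (y1, y2) * \sum_x2 w x2 * c (x1, x2) (y1, y2) (z1, z2)).
  by rewrite mulr_sumr; apply: eq_bigr => x2 _; rewrite /tens2; ring.
by rewrite cw; ring.
Qed.

End TensorCoordinates.

Section HeisenbergDoubles.
Variables (F : fieldType) (I : finType) (deg : I -> bool)
  (m : I -> I -> I -> F) (u : I -> F) (mu : I -> I -> I -> F) (eps : I -> F)
  (gam gami : I -> I -> F).
Hypothesis HH : graded_hopf deg m u mu eps gam gami.

Local Notation HAc := (HA_c deg m mu).
Local Notation HAsc := (HAs_c deg m mu).
Local Notation HAm := (mulB (HA_c deg m mu)).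
Local Notation HAsm := (mulB (HAs_c deg m mu)).

Local Notation "X ** Y" := (mul4 deg m mu X Y) (at level 40, left associativity).

(* [e^i e^j = \sum_k mdual i j k e^k] in the graded dual of A. *)
Definition mdual (i j k : I) : F := sg (deg i * deg j) * mu k i j.

Definition graded (p : bool) (f : I -> F) := forall i, f i != 0 -> deg i = p.
Definition homog (p : bool) (x : B I -> F) := forall k, x k != 0 -> odd (bdeg deg k) = p.

Lemma graded_eps : graded false eps. Proof. exact: gh_deg_eps HH. Qed.
Lemma graded_u : graded false u. Proof. exact: gh_deg_u HH. Qed.

(* In H(A), (e^x1 ⊗ e_x2)(1 ⊗ e_y2) = e^x1 ⊗ e_x2 e_y2 and
   (e^x1 ⊗ 1)(e^y1 ⊗ e_y2) = e^x1 e^y1 ⊗ e_y2; similarly in H(A-dual). *)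
Lemma HA_c_eps_r x1 x2 y2 z1 z2 :
  \sum_y1 eps y1 * HAc (x1, x2) (y1, y2) (z1, z2) = dlt z1 x1 * m x2 y2 z2.
Proof.
rewrite /HA_c /=.
transitivity (\sum_pi \sum_ep \sum_rho (\sum_y1 m pi ep y1 * eps y1) *
  (sg (deg pi * deg ep + deg pi * deg x1 + deg ep) * m rho y2 z2 * mu x2 ep rho
   * mu z1 x1 pi)).
  under eq_bigr do rewrite mulr_sum3r.
  rewrite sum_sink; do 3 apply: eq_bigr => ? _; rewrite mulr_suml.
  apply: eq_bigr => y1 _; have [->|/graded_eps ey1] := eqVneq (eps y1) 0.
    by rewrite !(mul0r, mulr0).
  by rewrite ey1 muln0 add0n; ring.
transitivity ((\sum_pi eps pi * mu z1 x1 pi) *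
  (\sum_ep \sum_rho eps ep * mu x2 ep rho * m rho y2 z2)).
  rewrite mulr_suml; apply: eq_bigr => pi _; rewrite mulr_sumr; apply: eq_bigr => ep _.
  rewrite mulr_sumr; apply: eq_bigr => rho _; rewrite (gh_eps_mul HH).
  have [->|/graded_eps ->] := eqVneq (eps pi) 0; first by rewrite !(mul0r, mulr0).
  have [->|/graded_eps ->] := eqVneq (eps ep) 0; first by rewrite !(mul0r, mulr0).
  rewrite /sg /= expr0; ring.
rewrite (gh_counitr HH); congr (_ * _).
rewrite exchange_big /=; under eq_bigr do rewrite -mulr_suml (gh_counitl HH).
exact: sum_dlt_r.
Qed.

Lemma HA_c_u_l x1 y1 y2 z1 z2 :
  \sum_x2 u x2 * HAc (x1, x2) (y1, y2) (z1, z2) = mdual x1 y1 z1 * dlt y2 z2.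
Proof.
rewrite /HA_c /=.
transitivity (\sum_pi \sum_ep \sum_rho (\sum_x2 u x2 * mu x2 ep rho) *
  (sg (deg pi * deg ep + deg pi * deg x1 + deg ep) * m pi ep y1 * m rho y2 z2
   * mu z1 x1 pi)).
  under eq_bigr do rewrite mulr_sum3r.
  rewrite sum_sink; do 3 apply: eq_bigr => ? _; rewrite mulr_suml.
  apply: eq_bigr => x2 _; have [->|/graded_u ex2] := eqVneq (u x2) 0.
    by rewrite !(mul0r, mulr0).
  by rewrite ex2 add0n; ring.
transitivity (\sum_pi (\sum_ep u ep * m pi ep y1) * (\sum_rho u rho * m rho y2 z2) *
  (sg (deg pi * deg x1) * mu z1 x1 pi)).
  apply: eq_bigr => pi _; rewrite big_distrlr /= mulr_suml; apply: eq_bigr => ep _.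
  rewrite mulr_suml; apply: eq_bigr => rho _; rewrite (gh_delta_unit HH).
  have [->|/graded_u ->] := eqVneq (u ep) 0; first by rewrite !(mul0r, mulr0).
  rewrite muln0 addn0 add0n; ring.
under eq_bigr do rewrite (gh_unitr HH) (gh_unitl HH) mulrAC.
by rewrite -mulr_suml sum_dlt_l mulnC.
Qed.

Lemma HAs_c_u_r x1 x2 y2 z1 z2 :
  \sum_y1 u y1 * HAsc (x1, x2) (y1, y2) (z1, z2) = dlt z1 x1 * mdual x2 y2 z2.
Proof.
rewrite /HAs_c /=.
transitivity (\sum_rho \sum_ep \sum_pi (\sum_y1 u y1 * mu y1 rho ep) *
  (sg (deg rho * deg pi + deg rho * deg ep + deg pi * deg y2) * mu z2 pi y2
   * m ep pi x2 * m x1 rho z1)).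
  under eq_bigr do rewrite mulr_sum3r.
  rewrite sum_sink; do 3 apply: eq_bigr => ? _; rewrite mulr_suml.
  by apply: eq_bigr => y1 _; ring.
transitivity ((\sum_rho u rho * m x1 rho z1) *
  \sum_ep \sum_pi u ep * m ep pi x2 * (sg (deg pi * deg y2) * mu z2 pi y2)).
  rewrite mulr_suml; apply: eq_bigr => rho _; rewrite mulr_sumr; apply: eq_bigr => ep _.
  rewrite mulr_sumr; apply: eq_bigr => pi _; rewrite (gh_delta_unit HH).
  have [->|/graded_u ->] := eqVneq (u rho) 0; first by rewrite !(mul0r, mulr0).
  rewrite !mul0n !add0n; ring.
rewrite (gh_unitr HH) dltC exchange_big /=; congr (_ * _).
by under eq_bigr do rewrite -mulr_suml (gh_unitl HH); rewrite sum_dlt_l.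
Qed.

Lemma HAs_c_eps_l x1 y1 y2 z1 z2 :
  \sum_x2 eps x2 * HAsc (x1, x2) (y1, y2) (z1, z2) = m x1 y1 z1 * dlt y2 z2.
Proof.
rewrite /HAs_c /=.
transitivity (\sum_rho \sum_ep \sum_pi (\sum_x2 m ep pi x2 * eps x2) *
  (sg (deg rho * deg pi + deg rho * deg ep + deg pi * deg y2) * mu y1 rho ep
   * mu z2 pi y2 * m x1 rho z1)).
  under eq_bigr do rewrite mulr_sum3r.
  rewrite sum_sink; do 3 apply: eq_bigr => ? _; rewrite mulr_suml.
  by apply: eq_bigr => x2 _; ring.
transitivity (\sum_rho (\sum_ep eps ep * mu y1 rho ep) *
  (\sum_pi eps pi * mu z2 pi y2) * m x1 rho z1).
  apply: eq_bigr => rho _; rewrite big_distrlr /= mulr_suml; apply: eq_bigr => ep _.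
  rewrite mulr_suml; apply: eq_bigr => pi _; rewrite (gh_eps_mul HH).
  have [->|/graded_eps ->] := eqVneq (eps ep) 0; first by rewrite !(mul0r, mulr0).
  have [->|/graded_eps ->] := eqVneq (eps pi) 0; first by rewrite !(mul0r, mulr0).
  rewrite !muln0 !mul0n /sg expr0; ring.
under eq_bigr do rewrite (gh_counitr HH) (gh_counitl HH) mulrAC.
by rewrite -mulr_suml sum_dlt_r dltC.
Qed.

Lemma mdual_unit_l j k : \sum_i eps i * mdual i j k = dlt j k.
Proof.
rewrite dltC -(gh_counitl HH); apply: eq_bigr => i _ ; rewrite /mdual.
by have [->|/graded_eps ->] := eqVneq (eps i) 0; rewrite ?mul0r // mul0n mul1r.
Qed.

Lemma mdual_unit_r i k : \sum_j eps j * mdual i j k = dlt i k.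
Proof.
rewrite dltC -(gh_counitr HH); apply: eq_bigr => j _ ; rewrite /mdual.
by have [->|/graded_eps ->] := eqVneq (eps j) 0; rewrite ?mul0r // muln0 mul1r.
Qed.

Lemma HA_mul_one x : HAm x (HA_one u eps) = x.
Proof.
rewrite (mulB_tens2_r HA_c_eps_r); apply: functional_extensionality => -[z1 z2] /=.
by under eq_bigr do rewrite (gh_unitr HH) mulrC; rewrite sum_dlt_l.
Qed.

Lemma HA_one_mul y : HAm (HA_one u eps) y = y.
Proof.
rewrite (mulB_tens2_l HA_c_u_l); apply: functional_extensionality => -[z1 z2] /=.
by under eq_bigr do rewrite mdual_unit_l mulrC; rewrite sum_dlt_l.
Qed.

Lemma HAs_mul_one x : HAsm x (HAs_one u eps) = x.
Proof.
rewrite (mulB_tens2_r HAs_c_u_r); apply: functional_extensionality => -[z1 z2] /=.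
by under eq_bigr do rewrite mdual_unit_r mulrC; rewrite sum_dlt_l.
Qed.

Lemma HAs_one_mul y : HAsm (HAs_one u eps) y = y.
Proof.
rewrite (mulB_tens2_l HAs_c_eps_l); apply: functional_extensionality => -[z1 z2] /=.
by under eq_bigr do rewrite (gh_unitl HH) mulrC; rewrite sum_dlt_l.
Qed.

Lemma HA_lo_mul al be : HAm (HA_lo eps al) (HA_lo eps be) = tens2 eps (m al be).
Proof.
rewrite (mulB_tens2_r HA_c_eps_r _ (dlt^~ be)).
apply: functional_extensionality => -[z1 z2] /=.
by under eq_bigr do rewrite sum_dlt_l -mulrA; rewrite /= -mulr_sumr sum_dlt_l.
Qed.

Lemma HA_up_mul be de : HAm (HA_up u be) (HA_up u de) = tens2 (mdual be de) u.
Proof.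
rewrite (mulB_tens2_l HA_c_u_l (dlt^~ be)).
apply: functional_extensionality => -[z1 z2] /=.
by under eq_bigr do rewrite sum_dlt_l mulrAC; rewrite /= -mulr_suml sum_dlt_l.
Qed.

Lemma HAs_lo_mul ga de : HAsm (HAs_lo eps ga) (HAs_lo eps de) = tens2 (m ga de) eps.
Proof.
rewrite (mulB_tens2_l HAs_c_eps_l (dlt^~ ga)).
apply: functional_extensionality => -[z1 z2] /=.
by under eq_bigr do rewrite sum_dlt_l mulrAC; rewrite /= -mulr_suml sum_dlt_l.
Qed.

Lemma HAs_up_mul al ga : HAsm (HAs_up u al) (HAs_up u ga) = tens2 u (mdual al ga).
Proof.
rewrite (mulB_tens2_r HAs_c_u_r _ (dlt^~ ga)).
apply: functional_extensionality => -[z1 z2] /=.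
by under eq_bigr do rewrite sum_dlt_l -mulrA; rewrite /= -mulr_sumr sum_dlt_l.
Qed.

Lemma homog_tens2 p q f g : graded p f -> graded q g -> homog (p (+) q) (tens2 f g).
Proof.
move=> hf hg [k1 k2]; rewrite /tens2 mulf_eq0 negb_or => /andP[/hf <- /hg <-].
by rewrite /bdeg oddD !oddb.
Qed.

Lemma graded_dlt al : graded (deg al) (dlt^~ al).
Proof. by move=> i; rewrite /dlt /=; case: (i =P al) => [->|_]; rewrite ?eqxx. Qed.

Lemma graded_mdual al be : graded (deg al (+) deg be) (mdual al be).
Proof.
by move=> k; rewrite /mdual mulf_eq0 negb_or => /andP[_ /(gh_deg_mu HH)].
Qed.

Lemma homog_HA_one : homog false (HA_one u eps).
Proof. exact: homog_tens2 graded_eps graded_u. Qed.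
Lemma homog_HAs_one : homog false (HAs_one u eps).
Proof. exact: homog_tens2 graded_u graded_eps. Qed.
Lemma homog_HA_lo al : homog (deg al) (HA_lo eps al).
Proof. exact: homog_tens2 graded_eps (@graded_dlt al). Qed.
Lemma homog_HA_up al : homog (deg al) (HA_up u al).
Proof. by rewrite -[deg al]addbF; exact: homog_tens2 (@graded_dlt al) graded_u. Qed.
Lemma homog_HAs_lo al : homog (deg al) (HAs_lo eps al).
Proof. by rewrite -[deg al]addbF; exact: homog_tens2 (@graded_dlt al) graded_eps. Qed.
Lemma homog_HAs_up al : homog (deg al) (HAs_up u al).
Proof. exact: homog_tens2 graded_u (@graded_dlt al). Qed.
Lemma homog_tens2_u_mdual al be : homog (deg al (+) deg be) (tens2 u (mdual al be)).
Proof. exact: homog_tens2 graded_u (@graded_mdual al be). Qed.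

Lemma mul4_tens p2 p3 p4 q1 q2 q3 x2 x3 x4 y1 y2 y3
    (hx2 : homog p2 x2) (hx3 : homog p3 x3) (hx4 : homog p4 x4)
    (hy1 : homog q1 y1) (hy2 : homog q2 y2) (hy3 : homog q3 y3) x1 y4 k1 k2 k3 k4 :
  (tens4 x1 x2 x3 x4 ** tens4 y1 y2 y3 y4) k1 k2 k3 k4 =
  sg (p2 * q1 + p3 * (q1 + q2) + p4 * (q1 + q2 + q3)) *
    tens4 (HAm x1 y1) (HAsm x2 y2) (HAm x3 y3) (HAsm x4 y4) k1 k2 k3 k4.
Proof.
rewrite /tens4 /mulB -sum_prod4 /mul4.
apply: eq_bigr => i1 _; apply: eq_bigr => i2 _; apply: eq_bigr => i3 _.
apply: eq_bigr => i4 _; apply: eq_bigr => j1 _; apply: eq_bigr => j2 _.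
apply: eq_bigr => j3 _; apply: eq_bigr => j4 _.
have [->|/hx2 e2] := eqVneq (x2 i2) 0; first by rewrite !(mul0r, mulr0).
have [->|/hx3 e3] := eqVneq (x3 i3) 0; first by rewrite !(mul0r, mulr0).
have [->|/hx4 e4] := eqVneq (x4 i4) 0; first by rewrite !(mul0r, mulr0).
have [->|/hy1 f1] := eqVneq (y1 j1) 0; first by rewrite !(mul0r, mulr0).
have [->|/hy2 f2] := eqVneq (y2 j2) 0; first by rewrite !(mul0r, mulr0).
have [->|/hy3 f3] := eqVneq (y3 j3) 0; first by rewrite !(mul0r, mulr0).
by rewrite sg_mul4_parity e2 e3 e4 f1 f2 f3; ring.
Qed.

Lemma mul4_suml (J : finType) (X : J -> T4 F I) Y k1 k2 k3 k4 :
  ((fun k1 k2 k3 k4 => \sum_j X j k1 k2 k3 k4) ** Y) k1 k2 k3 k4 =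
  \sum_j (X j ** Y) k1 k2 k3 k4.
Proof.
rewrite /mul4; do 8 (rewrite [RHS]exchange_big; apply: eq_bigr => ? _).
by rewrite /= !mulr_suml.
Qed.

Lemma mul4_sumr (J : finType) X (Y : J -> T4 F I) k1 k2 k3 k4 :
  (X ** (fun k1 k2 k3 k4 => \sum_j Y j k1 k2 k3 k4)) k1 k2 k3 k4 =
  \sum_j (X ** Y j) k1 k2 k3 k4.
Proof.
rewrite /mul4; do 8 (rewrite [RHS]exchange_big; apply: eq_bigr => ? _).
by rewrite /= [X _ _ _ _ * _]mulr_sumr !mulr_suml.
Qed.

Lemma mul4_scalel c (X Y : T4 F I) k1 k2 k3 k4 :
  ((fun k1 k2 k3 k4 => c * X k1 k2 k3 k4) ** Y) k1 k2 k3 k4 =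
  c * (X ** Y) k1 k2 k3 k4.
Proof.
rewrite /mul4; do 8 (rewrite [RHS]mulr_sumr; apply: eq_bigr => ? _).
by rewrite !mulrA.
Qed.

Lemma mul4_scaler c (X Y : T4 F I) k1 k2 k3 k4 :
  (X ** (fun k1 k2 k3 k4 => c * Y k1 k2 k3 k4)) k1 k2 k3 k4 =
  c * (X ** Y) k1 k2 k3 k4.
Proof.
rewrite /mul4; do 8 (rewrite [RHS]mulr_sumr; apply: eq_bigr => ? _).
by ring.
Qed.

Lemma Spp14_mul_S13 a b' :
  Spp14 deg u eps a b' ** S13 deg u eps =
  fun k1 k2 k3 k4 => \sum_al \sum_be sg ((a + b') * deg al + deg be) *
    tens4 (tens2 eps (m al be)) (HAs_one u eps) (HA_up u be) (HAs_up u al)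
      k1 k2 k3 k4.
Proof.
do 4 apply: functional_extensionality => ?.
rewrite mul4_suml; apply: eq_bigr => al _.
rewrite mul4_scalel mul4_sumr mulr_sumr; apply: eq_bigr => be _.
rewrite mul4_scaler (mul4_tens homog_HAs_one homog_HA_one (@homog_HAs_up al)
  (@homog_HA_lo be) homog_HAs_one (@homog_HA_up be)).
rewrite HA_lo_mul HAs_mul_one HA_one_mul HAs_mul_one 2!mulrA -!sgD.
congr (_ * _); apply: sg_odd; rewrite !(oddD, oddM, oddb).
by case: (deg al) (deg be) (odd a) (odd b') => [] [] [] [].
Qed.

Lemma Spp14_S13_mul_St24 a b' :
  Spp14 deg u eps a b' ** S13 deg u eps ** St24 u eps =
  fun k1 k2 k3 k4 => \sum_al \sum_be \sum_ga
    sg ((a + b') * deg al + deg be + deg ga * (deg al + deg be)) *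
    tens4 (tens2 eps (m al be)) (HAs_lo eps ga) (HA_up u be) (tens2 u (mdual al ga))
      k1 k2 k3 k4.
Proof.
rewrite Spp14_mul_S13; do 4 apply: functional_extensionality => ?.
rewrite mul4_suml; apply: eq_bigr => al _.
rewrite mul4_suml; apply: eq_bigr => be _.
rewrite mul4_scalel mul4_sumr mulr_sumr; apply: eq_bigr => ga _.
rewrite (mul4_tens homog_HAs_one (@homog_HA_up be) (@homog_HAs_up al)
  homog_HA_one (@homog_HAs_lo ga) homog_HA_one).
rewrite HA_mul_one HAs_one_mul HA_mul_one HAs_up_mul mulrA -sgD.
congr (_ * _); apply: sg_odd; rewrite !(oddD, oddM, oddb).
by case: (deg al) (deg be) (deg ga) (odd a) (odd b') => [] [] [] [] [].
Qed.

Lemma Spp14_S13_St24_mul_Sp23 a b' :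
  Spp14 deg u eps a b' ** S13 deg u eps ** St24 u eps ** Sp23 deg u eps a b' =
  fun k1 k2 k3 k4 => \sum_al \sum_be \sum_ga \sum_de
    sg ((a + b') * deg al + deg be + deg ga * (deg al + deg be)
        + (a + b' + 1) * deg de + deg be * deg de) *
    tens4 (tens2 eps (m al be)) (tens2 (m ga de) eps) (tens2 (mdual be de) u)
      (tens2 u (mdual al ga)) k1 k2 k3 k4.
Proof.
rewrite Spp14_S13_mul_St24; do 4 apply: functional_extensionality => ?.
rewrite mul4_suml; apply: eq_bigr => al _.
rewrite mul4_suml; apply: eq_bigr => be _.
rewrite mul4_suml; apply: eq_bigr => ga _.
rewrite mul4_scalel mul4_sumr mulr_sumr; apply: eq_bigr => de _.
rewrite mul4_scaler (mul4_tens (@homog_HAs_lo ga) (@homog_HA_up be)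
  (@homog_tens2_u_mdual al ga) homog_HA_one (@homog_HAs_lo de) (@homog_HA_up de)).
rewrite HA_mul_one HAs_lo_mul HA_up_mul HAs_mul_one 2!mulrA -!sgD.
congr (_ * _); apply: sg_odd; rewrite !(oddD, oddM, oddb).
by case: (deg al) (deg be) (deg ga) (deg de) (odd a) (odd b') => [] [] [] [] [] [].
Qed.

Lemma etaR_eval a a' b b' x1 ka kl x2 kr x3 x4 ks :
  etaR deg m u mu eps a a' b b' (x1, ka) (kl, x2) (kr, x3) (x4, ks) =
  eps x1 * eps x2 * u x3 * u x4 *
  (sg (a * deg ka + b * deg kl) * sg (a' * deg kr + b' * deg ks)) *
  \sum_al m ks kr al * mu al ka kl.
Proof.
rewrite /etaR mulr_sumr; apply: eq_bigr => al _.
transitivity (\sum_be dlt ka be * \sum_ga dlt kl ga * \sum_be' dlt kr be' *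
  \sum_ga' dlt ks ga' * (sg (a * deg be + b * deg ga) * mu al be ga *
  (sg (a' * deg be' + b' * deg ga') * m ga' be' al) * (eps x1 * eps x2 * u x3 * u x4))).
  apply: eq_bigr => be _; rewrite !mulr_sumr; apply: eq_bigr => ga _.
  rewrite !mulr_sumr; apply: eq_bigr => be' _; rewrite !mulr_sumr.
  by apply: eq_bigr => ga' _; rewrite /tens4 /HA_lo /HAs_lo /HA_up /HAs_up /=; ring.
by rewrite !sum_dlt_r; ring.
Qed.

Lemma etaR_sum a a' b b' :
  etaR deg m u mu eps a a' b b' =
  fun k1 k2 k3 k4 => \sum_al \sum_be \sum_ga \sum_de
    sg (a * (deg al + deg be) + b * (deg ga + deg de) + a' * (deg be + deg de)
        + b' * (deg al + deg ga) + deg ga * deg be + deg be * deg de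
        + deg al * deg ga) *
    tens4 (tens2 eps (m al be)) (tens2 (m ga de) eps) (tens2 (mdual be de) u)
      (tens2 u (mdual al ga)) k1 k2 k3 k4.
Proof.
apply: functional_extensionality => -[x1 ka]; apply: functional_extensionality => -[kl x2].
apply: functional_extensionality => -[kr x3]; apply: functional_extensionality => -[x4 ks].
pose E := eps x1 * eps x2 * u x3 * u x4.
rewrite etaR_eval -/E (gh_delta_mul HH) mulr_sumr; apply: eq_bigr => al _.
rewrite mulr_sum3r [RHS]exchange_big /=; apply: eq_bigr => ga _.
apply: eq_bigr => be _; apply: eq_bigr => de _.
transitivity (sg (a * deg ka + b * deg kl + (a' * deg kr + b' * deg ks) + deg ga * deg be) *
  (E * (mu ks al ga * mu kr be de * m al be ka * m ga de kl))).
  by rewrite !sgD; ring.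
(* The two trailing terms compensate the signs hidden in [mdual]. *)
transitivity (sg (a * (deg al + deg be) + b * (deg ga + deg de) + a' * (deg be + deg de)
        + b' * (deg al + deg ga) + deg ga * deg be + deg be * deg de
        + deg al * deg ga + deg be * deg de + deg al * deg ga) *
  (E * (mu ks al ga * mu kr be de * m al be ka * m ga de kl)));
  last by rewrite !sgD /tens4 /tens2 /mdual /E /=; ring.
have [->|/(gh_deg_m HH) hka] := eqVneq (m al be ka) 0; first by rewrite !(mul0r, mulr0).
have [->|/(gh_deg_m HH) hkl] := eqVneq (m ga de kl) 0; first by rewrite !(mul0r, mulr0).
have [->|/(gh_deg_mu HH) hkr] := eqVneq (mu kr be de) 0; first by rewrite !(mul0r, mulr0).
have [->|/(gh_deg_mu HH) hks] := eqVneq (mu ks al ga) 0; first by rewrite !(mul0r, mulr0).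
congr (_ * _); apply: sg_odd; rewrite !(oddD, oddM, oddb) hka hkl hkr hks.
by case: (odd a) (odd a') (odd b) (odd b') (deg al) (deg be) (deg ga) (deg de)
  => [] [] [] [] [] [] [] [].
Qed.

End HeisenbergDoubles.

Lemma eta_sign_parity (a a' b b' : nat) (d1 d2 d3 d4 : bool) :
    odd (a + a') -> ~~ odd (b + b') ->
  odd (a * (d1 + d2) + b * (d3 + d4) + a' * (d2 + d4) + b' * (d1 + d3)
       + d3 * d2 + d2 * d4 + d1 * d3) =
  odd ((a + b') * d1 + d2 + d3 * (d1 + d2) + (a + b' + 1) * d4 + d2 * d4).
Proof.
rewrite !(oddD, oddM, oddb) negb_add => /addbP <- /eqP <-.
by case: (odd a) (odd b) d1 d2 d3 d4 => [] [] [] [] [] [].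
Qed.

Theorem mainTheorem5 (F : numClosedFieldType) (I : finType) (deg : I -> bool)
  (m : I -> I -> I -> F) (u : I -> F) (mu : I -> I -> I -> F) (eps : I -> F)
  (gam gami : I -> I -> F)
  (HH : graded_hopf deg m u mu eps gam gami)
  (a a' b b' : nat) (Haa' : odd (a + a')) (Hbb' : ~~ odd (b + b')) :
  etaR deg m u mu eps a a' b b' =
  mul4 deg m mu
    (mul4 deg m mu
       (mul4 deg m mu (Spp14 deg u eps a b') (S13 deg u eps))
       (St24 u eps))
    (Sp23 deg u eps a b').
Proof.
rewrite (etaR_sum HH) (Spp14_S13_St24_mul_Sp23 HH).
do 4 apply: functional_extensionality => ?.
do 4 (apply: eq_bigr => ? _); congr (_ * _).
by apply: sg_odd; apply: eta_sign_parity.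
Qed.
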